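(* Let $K_x,K_y,K_z>0$. Then $\min_{\vec q\in[-\pi,\pi]^2}\epsilon_{\vec q,1}=0$ if and only if $|K_x-K_y|\le K_z\le K_x+K_y$ (i.e. $K_x,K_y,K_z$ satisfy all three triangle inequalities). When these inequalities hold, $\epsilon_{\vec q,1}$ vanishes at $\vec q=(0,\pm q_y^* )$ with $\cos q_y^*=\dfrac{\cosh2K_z-\cosh2K_x\cosh2K_y}{\sinh2K_x\sinh2K_y}$; otherwise $\epsilon_{\vec q,1}>0$ for all $\vec q$.
   Context: For $\vec q=(q_x,q_y)$, with $P=\begin{pmatrix}0&i&0&0\\-i&0&0&0\\0&0&0&i\\0&0&-i&0\end{pmatrix}$, $Q=\begin{pmatrix}0&ie^{-iq_y}&0&0\\-ie^{iq_y}&0&0&0\\0&0&0&ie^{iq_y}\\0&0&-ie^{-iq_y}&0\end{pmatrix}$, $R=\begin{pmatrix}0&0&0&ie^{-iq_x}\\0&0&-i&0\\0&i&0&0\\-ie^{iq_x}&0&0&0\end{pmatrix}$, let $T_{\vec q}=e^{2K_xP}e^{2K_yQ}e^{2K_zR}$. Its eigenvalues are $e^{\pm\epsilon_{\vec q,1}},e^{\pm\epsilon_{\vec q,2}}$ with $0\le\epsilon_{\vec q,1}\le\epsilon_{\vec q,2}$ real. Equivalently $z_j=\cosh\epsilon_{\vec q,j}$ are the roots of $z^2+Az+B=0$ with $A=-2c_3(c_1c_2+s_1s_2\cos q_y)$, $B=\tfrac18S_1S_2(3+C_3-2s_3^2\cos q_x)\cos q_y+\tfrac12s_1^2s_2^2\cos2q_y+\tfrac14s_3^2(1-C_1C_2)\cos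 q_x+\tfrac18(C_1+C_2+3C_3)+\tfrac14C_1C_2+\tfrac18C_1C_2C_3$, where $c_j=\cosh2K_j$, $s_j=\sinh2K_j$, $C_j=\cosh4K_j$, $S_j=\sinh4K_j$ and indices $1,2,3$ stand for $x,y,z$.
   Formalization: $\epsilon_{\vec q,1}$ is the arccosh of the smaller root of $z^2+Az+B=0$, and where A²−4B < 0 it is taken as the arccosh of −A/2, the real part of the complex roots. Apart from conventions, each condition added here is assumed in the paper as well or is needed for the statement above to hold. *)

From Stdlib Require Import Reals.
Open Scope R_scope.

(* Coefficients of the quadratic z^2 + A z + B = 0 whose roots are
   z_j = cosh eps_{q,j}  (as given in the paper's context).
   Index 1,2,3 = x,y,z.  c_j = cosh 2K_j, s_j = sinh 2K_j,
   C_j = cosh 4K_j, S_j = sinh 4K_j. *)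
Definition coefA (Kx Ky Kz qx qy : R) : R :=
  - 2 * cosh (2*Kz) * (cosh (2*Kx) * cosh (2*Ky) + sinh (2*Kx) * sinh (2*Ky) * cos qy).

Definition coefB (Kx Ky Kz qx qy : R) : R :=
  let s1 := sinh (2*Kx) in let s2 := sinh (2*Ky) in let s3 := sinh (2*Kz) in
  let C1 := cosh (4*Kx) in let C2 := cosh (4*Ky) in let C3 := cosh (4*Kz) in
  let S1 := sinh (4*Kx) in let S2 := sinh (4*Ky) in
  / 8 * S1 * S2 * (3 + C3 - 2 * s3 ^ 2 * cos qx) * cos qy
  + / 2 * s1 ^ 2 * s2 ^ 2 * cos (2 * qy)
  + / 4 * s3 ^ 2 * (1 - C1 * C2) * cos qx
  + / 8 * (C1 + C2 + 3 * C3) + / 4 * C1 * C2 + / 8 * C1 * C2 * C3.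

Definition z1 (Kx Ky Kz qx qy : R) : R :=
  let A := coefA Kx Ky Kz qx qy in let B := coefB Kx Ky Kz qx qy in
  (- A - sqrt (A ^ 2 - 4 * B)) / 2.

Definition acosh (z : R) : R := ln (z + sqrt (z ^ 2 - 1)).

(* eps_{q,1} = arccosh z_1 (the smaller nonnegative exponent, since
   cosh is increasing on [0,+oo)). *)
Definition eps1 (Kx Ky Kz qx qy : R) : R := acosh (z1 Kx Ky Kz qx qy).

Definition in_BZ (qx qy : R) : Prop := -PI <= qx <= PI /\ -PI <= qy <= PI.

Definition min_BZ_is (f : R -> R -> R) (m : R) : Prop :=
  (exists qx qy, in_BZ qx qy /\ f qx qy = m) /\
  (forall qx qy, in_BZ qx qy -> m <= f qx qy).

(* Write X(q_y) = c_1 c_2 + s_1 s_2 cos q_y, so that A = -2 c_3 X.  Evaluating the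
   quadratic at z = 1 gives
     1 + A + B = (X - c_3)^2 + (1 - cos q_x) s_3^2 G(q_y) / 4,
   with G = C_1 C_2 - 1 + S_1 S_2 cos q_y >= cosh (4K_x - 4K_y) - 1 >= 0.
   As X >= 1 and c_3 > 1, the vertex -A/2 of the parabola lies to the right of 1,
   so the smaller root z_1 = cosh eps_1 equals 1 when the value at 1 vanishes and
   exceeds 1 when it is positive.  Finally X sweeps exactly
   [cosh (2K_x - 2K_y), cosh (2K_x + 2K_y)] as q_y varies, and c_3 lies in this
   interval iff K_x, K_y, K_z satisfy the triangle inequalities; at q_x = 0 and
   X(q_y) = c_3 the value at 1 vanishes. *)

From Stdlib Require Import Reals Lra Psatz Classical.
Open Scope R_scope.

Lemma cosh_opp x : cosh (- x) = cosh x.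
Proof. unfold cosh; rewrite Ropp_involutive; lra. Qed.

Lemma cosh_Rabs x : cosh (Rabs x) = cosh x.
Proof. unfold Rabs; destruct (Rcase_abs x); [apply cosh_opp | reflexivity]. Qed.

Lemma cosh_plus a b : cosh (a + b) = cosh a * cosh b + sinh a * sinh b.
Proof.
  unfold cosh, sinh; rewrite Ropp_plus_distr, !exp_plus, !exp_Ropp.
  pose proof (exp_pos a); pose proof (exp_pos b); field; lra.
Qed.

Lemma cosh_minus a b : cosh (a - b) = cosh a * cosh b - sinh a * sinh b.
Proof.
  unfold Rminus; rewrite cosh_plus, cosh_opp.
  unfold sinh; rewrite Ropp_involutive; field.
Qed.

Lemma cosh_sub_cosh a b :
  cosh b - cosh a = (exp b - exp a) * (exp a * exp b - 1) / (2 * exp a * exp b).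
Proof.
  unfold cosh; rewrite !exp_Ropp.
  pose proof (exp_pos a); pose proof (exp_pos b); field; lra.
Qed.

Lemma cosh_lt a b : 0 <= a < b -> cosh a < cosh b.
Proof.
  intros [Ha Hab].
  pose proof (exp_pos a); pose proof (exp_pos b).
  assert (Hexp : exp a < exp b) by (apply exp_increasing; lra).
  assert (Hprod : 1 < exp a * exp b)
    by (rewrite <- exp_plus, <- exp_0; apply exp_increasing; lra).
  assert (Hdiff : 0 < (exp b - exp a) * (exp a * exp b - 1) / (2 * exp a * exp b)).
  { apply Rdiv_lt_0_compat; [apply Rmult_lt_0_compat | nra]; lra. }
  rewrite <- cosh_sub_cosh in Hdiff; lra.
Qed.

Lemma cosh_lt_Rabs a b : Rabs a < Rabs b -> cosh a < cosh b.
Proof.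
  intro H; rewrite <- (cosh_Rabs a), <- (cosh_Rabs b).
  apply cosh_lt; split; [apply Rabs_pos | exact H].
Qed.

Lemma cosh_le_Rabs_iff a b : cosh a <= cosh b <-> Rabs a <= Rabs b.
Proof.
  split; intro H.
  - apply Rnot_lt_le; intro Hlt; pose proof (cosh_lt_Rabs b a Hlt); lra.
  - destruct (Rle_lt_or_eq_dec _ _ H) as [Hlt | Heq].
    + left; apply cosh_lt_Rabs, Hlt.
    + rewrite <- (cosh_Rabs a), <- (cosh_Rabs b), Heq; lra.
Qed.

Lemma cosh_ge_1 x : 1 <= cosh x.
Proof. rewrite <- cosh_0, cosh_le_Rabs_iff, Rabs_R0; apply Rabs_pos. Qed.

Lemma cosh_gt_1 x : x <> 0 -> 1 < cosh x.
Proof.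
  intro H; rewrite <- cosh_0; apply cosh_lt_Rabs.
  rewrite Rabs_R0; apply Rabs_pos_lt, H.
Qed.

Lemma sinh_nonneg x : 0 <= x -> 0 <= sinh x.
Proof.
  intro H; rewrite <- sinh_0.
  destruct (Rle_lt_or_eq_dec _ _ H) as [Hlt | <-]; [left; apply sinh_lt, Hlt | lra].
Qed.

Lemma sinh_pos x : 0 < x -> 0 < sinh x.
Proof. intro H; rewrite <- sinh_0; apply sinh_lt, H. Qed.

Lemma triangle_iff_cosh (a b c : R) : 0 <= a -> 0 <= b -> 0 <= c ->
  (Rabs (a - b) <= c <= a + b <->
   cosh (2*a - 2*b) <= cosh (2*c) <= cosh (2*a + 2*b)).
Proof.
  intros Ha Hb Hc.
  rewrite !cosh_le_Rabs_iff.
  replace (2*a - 2*b) with (2 * (a - b)) by ring.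
  rewrite Rabs_mult, (Rabs_pos_eq 2), (Rabs_pos_eq (2*c)), (Rabs_pos_eq (2*a + 2*b)) by lra.
  lra.
Qed.

Definition smaller_root (A B : R) : R := (- A - sqrt (A ^ 2 - 4 * B)) / 2.

Lemma smaller_root_eq_1 A B : A < -2 -> 1 + A + B = 0 -> smaller_root A B = 1.
Proof.
  intros HA HB; unfold smaller_root.
  replace (A ^ 2 - 4 * B) with ((- A - 2) ^ 2) by nra.
  rewrite sqrt_pow2 by lra; lra.
Qed.

Lemma smaller_root_gt_1 A B : A < -2 -> 0 < 1 + A + B -> 1 < smaller_root A B.
Proof.
  intros HA HB; unfold smaller_root.
  destruct (Rle_dec (A ^ 2 - 4 * B) 0) as [Hneg | Hpos].
  (* [sqrt] of a negative number is [0]: the "root" is then the vertex [- A / 2]. *)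
  - rewrite sqrt_neg_0 by lra; lra.
  - assert (sqrt (A ^ 2 - 4 * B) < sqrt ((- A - 2) ^ 2)) by (apply sqrt_lt_1_alt; nra).
    rewrite sqrt_pow2 in * by lra; lra.
Qed.

Lemma acosh_1 : acosh 1 = 0.
Proof.
  unfold acosh; replace (1 ^ 2 - 1) with 0 by ring.
  rewrite sqrt_0, Rplus_0_r; apply ln_1.
Qed.

Lemma acosh_pos z : 1 < z -> 0 < acosh z.
Proof.
  intro H; unfold acosh; rewrite <- ln_1.
  pose proof (sqrt_pos (z ^ 2 - 1)); apply ln_increasing; lra.
Qed.

Definition coefX (Kx Ky qy : R) : R :=
  cosh (2*Kx) * cosh (2*Ky) + sinh (2*Kx) * sinh (2*Ky) * cos qy.

Definition coefG (Kx Ky qy : R) : R :=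
  cosh (4*Kx) * cosh (4*Ky) - 1 + sinh (4*Kx) * sinh (4*Ky) * cos qy.

Lemma quadratic_at_1_eq Kx Ky Kz qx qy :
  1 + coefA Kx Ky Kz qx qy + coefB Kx Ky Kz qx qy =
  (coefX Kx Ky qy - cosh (2*Kz)) ^ 2
  + (1 - cos qx) * sinh (2*Kz) ^ 2 * coefG Kx Ky qy / 4.
Proof.
  unfold coefA, coefB, coefX, coefG.
  replace (4*Kx) with (2*Kx + 2*Kx) by ring.
  replace (4*Ky) with (2*Ky + 2*Ky) by ring.
  replace (4*Kz) with (2*Kz + 2*Kz) by ring.
  rewrite cos_2a_cos.
  unfold cosh, sinh; rewrite !Ropp_plus_distr, !exp_plus, !exp_Ropp.
  pose proof (exp_pos (2*Kx)); pose proof (exp_pos (2*Ky)); pose proof (exp_pos (2*Kz)).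
  field; lra.
Qed.

Lemma coefG_nonneg Kx Ky qy : 0 <= Kx -> 0 <= Ky -> 0 <= coefG Kx Ky qy.
Proof.
  intros Hx Hy; unfold coefG.
  pose proof (cosh_ge_1 (4*Kx - 4*Ky)) as Hc; rewrite cosh_minus in Hc.
  pose proof (Rmult_le_pos _ _ (sinh_nonneg (4*Kx) ltac:(lra)) (sinh_nonneg (4*Ky) ltac:(lra))).
  pose proof (COS_bound qy); nra.
Qed.

Lemma coefX_bounds Kx Ky qy : 0 <= Kx -> 0 <= Ky ->
  cosh (2*Kx - 2*Ky) <= coefX Kx Ky qy <= cosh (2*Kx + 2*Ky).
Proof.
  intros Hx Hy; unfold coefX; rewrite cosh_minus, cosh_plus.
  pose proof (Rmult_le_pos _ _ (sinh_nonneg (2*Kx) ltac:(lra)) (sinh_nonneg (2*Ky) ltac:(lra))).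
  pose proof (COS_bound qy); nra.
Qed.

Lemma coefX_eq Kx Ky qy c : 0 < Kx -> 0 < Ky ->
  cos qy = (c - cosh (2*Kx) * cosh (2*Ky)) / (sinh (2*Kx) * sinh (2*Ky)) ->
  coefX Kx Ky qy = c.
Proof.
  intros Hx Hy Hq; unfold coefX; rewrite Hq.
  pose proof (sinh_pos (2*Kx) ltac:(lra)); pose proof (sinh_pos (2*Ky) ltac:(lra)).
  field; lra.
Qed.

Lemma coefA_lt_neg2 Kx Ky Kz qx qy : 0 <= Kx -> 0 <= Ky -> Kz <> 0 ->
  coefA Kx Ky Kz qx qy < -2.
Proof.
  intros Hx Hy Hz; unfold coefA; fold (coefX Kx Ky qy).
  pose proof (coefX_bounds Kx Ky qy Hx Hy); pose proof (cosh_ge_1 (2*Kx - 2*Ky)).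
  pose proof (cosh_gt_1 (2*Kz) ltac:(lra)); nra.
Qed.

Lemma eps1_eq_0 Kx Ky Kz qx qy : 0 <= Kx -> 0 <= Ky -> Kz <> 0 ->
  1 + coefA Kx Ky Kz qx qy + coefB Kx Ky Kz qx qy = 0 -> eps1 Kx Ky Kz qx qy = 0.
Proof.
  intros Hx Hy Hz H1; unfold eps1.
  change (acosh (smaller_root (coefA Kx Ky Kz qx qy) (coefB Kx Ky Kz qx qy)) = 0).
  rewrite smaller_root_eq_1; [apply acosh_1 | apply coefA_lt_neg2 | ]; auto.
Qed.

Lemma eps1_pos Kx Ky Kz qx qy : 0 <= Kx -> 0 <= Ky -> Kz <> 0 ->
  0 < 1 + coefA Kx Ky Kz qx qy + coefB Kx Ky Kz qx qy -> 0 < eps1 Kx Ky Kz qx qy.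
Proof.
  intros Hx Hy Hz H1; unfold eps1.
  change (0 < acosh (smaller_root (coefA Kx Ky Kz qx qy) (coefB Kx Ky Kz qx qy))).
  apply acosh_pos, smaller_root_gt_1; [apply coefA_lt_neg2 |]; auto.
Qed.

Lemma quadratic_at_1_ge_sqr Kx Ky Kz qx qy : 0 <= Kx -> 0 <= Ky ->
  (coefX Kx Ky qy - cosh (2*Kz)) ^ 2 <= 1 + coefA Kx Ky Kz qx qy + coefB Kx Ky Kz qx qy.
Proof.
  intros Hx Hy; rewrite quadratic_at_1_eq.
  pose proof (coefG_nonneg Kx Ky qy Hx Hy) as HG; pose proof (COS_bound qx).
  pose proof (Rmult_le_pos _ _ (Rmult_le_pos (1 - cos qx) _ ltac:(lra) (pow2_ge_0 (sinh (2*Kz)))) HG).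
  lra.
Qed.

Lemma eps1_nonneg Kx Ky Kz qx qy : 0 <= Kx -> 0 <= Ky -> Kz <> 0 ->
  0 <= eps1 Kx Ky Kz qx qy.
Proof.
  intros Hx Hy Hz.
  pose proof (quadratic_at_1_ge_sqr Kx Ky Kz qx qy Hx Hy).
  pose proof (pow2_ge_0 (coefX Kx Ky qy - cosh (2*Kz))).
  destruct (Rle_lt_or_eq_dec 0 (1 + coefA Kx Ky Kz qx qy + coefB Kx Ky Kz qx qy)) as [Hpos | Hzero].
  - lra.
  - left; apply eps1_pos; auto.
  - right; symmetry; apply eps1_eq_0; auto.
Qed.

Lemma eps1_pos_off_triangle Kx Ky Kz qx qy : 0 <= Kx -> 0 <= Ky -> 0 < Kz ->
  ~ (Rabs (Kx - Ky) <= Kz <= Kx + Ky) -> 0 < eps1 Kx Ky Kz qx qy.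
Proof.
  intros Hx Hy Hz Htri.
  rewrite triangle_iff_cosh in Htri by lra.
  pose proof (coefX_bounds Kx Ky qy Hx Hy).
  assert (Hne : coefX Kx Ky qy - cosh (2*Kz) <> 0) by lra.
  pose proof (Rsqr_pos_lt _ Hne); unfold Rsqr in *.
  pose proof (quadratic_at_1_ge_sqr Kx Ky Kz qx qy Hx Hy).
  apply eps1_pos; nra.
Qed.

Lemma eps1_eq_0_at_critical Kx Ky Kz qy : 0 < Kx -> 0 < Ky -> Kz <> 0 ->
  cos qy = (cosh (2*Kz) - cosh (2*Kx) * cosh (2*Ky)) / (sinh (2*Kx) * sinh (2*Ky)) ->
  eps1 Kx Ky Kz 0 qy = 0.
Proof.
  intros Hx Hy Hz Hq.
  apply eps1_eq_0; [lra | lra | exact Hz |].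
  rewrite quadratic_at_1_eq, cos_0, (coefX_eq Kx Ky qy (cosh (2*Kz))) by assumption.
  field.
Qed.

Lemma critical_cos_bounds Kx Ky Kz : 0 < Kx -> 0 < Ky -> 0 <= Kz ->
  Rabs (Kx - Ky) <= Kz <= Kx + Ky ->
  -1 <= (cosh (2*Kz) - cosh (2*Kx) * cosh (2*Ky)) / (sinh (2*Kx) * sinh (2*Ky)) <= 1.
Proof.
  intros Hx Hy Hz Htri.
  rewrite triangle_iff_cosh, cosh_minus, cosh_plus in Htri by lra.
  pose proof (Rmult_lt_0_compat _ _ (sinh_pos (2*Kx) ltac:(lra)) (sinh_pos (2*Ky) ltac:(lra))).
  set (s := sinh (2*Kx) * sinh (2*Ky)) in *.
  set (w := (cosh (2*Kz) - cosh (2*Kx) * cosh (2*Ky)) / s).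
  assert (Hw : w * s = cosh (2*Kz) - cosh (2*Kx) * cosh (2*Ky)) by (unfold w; field; lra).
  split; nra.
Qed.

Lemma eps1_vanishes_in_BZ Kx Ky Kz : 0 < Kx -> 0 < Ky -> 0 < Kz ->
  Rabs (Kx - Ky) <= Kz <= Kx + Ky ->
  exists qx qy, in_BZ qx qy /\ eps1 Kx Ky Kz qx qy = 0.
Proof.
  intros Hx Hy Hz Htri.
  set (w := (cosh (2*Kz) - cosh (2*Kx) * cosh (2*Ky)) / (sinh (2*Kx) * sinh (2*Ky))).
  assert (Hw : -1 <= w <= 1) by (apply critical_cos_bounds; [lra | lra | lra | exact Htri]).
  exists 0, (acos w); split.
  - pose proof (acos_bound w); pose proof PI_RGT_0; unfold in_BZ; lra.
  - apply eps1_eq_0_at_critical; [lra | lra | lra | apply cos_acos, Hw].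
Qed.

Theorem mainTheorem6 (Kx Ky Kz : R) :
  0 < Kx -> 0 < Ky -> 0 < Kz ->
  (min_BZ_is (eps1 Kx Ky Kz) 0 <-> Rabs (Kx - Ky) <= Kz <= Kx + Ky) /\
  (Rabs (Kx - Ky) <= Kz <= Kx + Ky ->
     forall qys : R,
       cos qys = (cosh (2*Kz) - cosh (2*Kx) * cosh (2*Ky)) / (sinh (2*Kx) * sinh (2*Ky)) ->
       eps1 Kx Ky Kz 0 qys = 0 /\ eps1 Kx Ky Kz 0 (- qys) = 0) /\
  (~ (Rabs (Kx - Ky) <= Kz <= Kx + Ky) ->
     forall qx qy : R, 0 < eps1 Kx Ky Kz qx qy).
Proof.
  intros Hx Hy Hz.
  assert (Hz0 : Kz <> 0) by lra.
  split; [split | split].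
  - intros [[qx [qy [_ Hzero]]] _].
    apply NNPP; intro Hoff.
    pose proof (eps1_pos_off_triangle Kx Ky Kz qx qy ltac:(lra) ltac:(lra) Hz Hoff); lra.
  - intro Htri; split.
    + apply eps1_vanishes_in_BZ; assumption.
    + intros qx qy _; apply eps1_nonneg; lra.
  - intros _ qys Hq; split; apply eps1_eq_0_at_critical; rewrite ?cos_neg; assumption.
  - intros Hoff qx qy; apply eps1_pos_off_triangle; [lra | lra | exact Hz | exact Hoff].
Qed.
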